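(* Let $0<\gamma<1$ and let $\Pi$ be a deterministic communication protocol on $\{0,1\}^n\times\{0,1\}^n$ of depth $d$. Then there exists a $\gamma$-subcube-like protocol $\tilde\Pi$ (whose protocol tree need not be binary and may be undefined on some inputs) of depth at most $d$ and codimension $\mathrm{codim}(\tilde\Pi)\le \frac{7}{1-\gamma}\, d$ such that \[ \Pr_{(\bm x,\bm y)\sim\{0,1\}^n\times\{0,1\}^n}\big[\Pi(\bm x,\bm y)\ne\tilde\Pi(\bm x,\bm y)\big]\le e^{-d}, \] where inputs on which $\tilde\Pi$ is undefined count as disagreements.
   Context: A (generalized) protocol is a rooted tree in which each node $v$ is associated with a rectangle $R_v=X_v\times Y_v\subseteq\{0,1\}^n\times\{0,1\}^n$, the root with a subset of the full input space, and at each internal node one player partitions her/his side: the children's rectangles are of the form $X'\times Y_v$ (Alice speaks) or $X_v\times Y'$ (Bob speaks) and are disjoint; leaves are labelled with outputs, and $\tilde\Pi(x,y)$ is the label of the leaf containing $(x,y)$. Min-entropy: $\mathbf H_\infty(\bm x)=\min_x\log(1/\Pr[\bm x=x])$. A random $\bm x\in\{0,1\}^n$ is $\gamma$-spread if $\mathbf H_\infty(\bm x_I)\ge\gamma|I|$ for every $I\subseteq[n]$. It is $(I,\gamma)$-structured if $\bm x_I$ is constant (fixed to some $a_I$) with probability 1 and $\bm x_{[n]\setminus I}$ is $\gamma$-spread. A rectangle $X\times Y$ is $\gamma$-subcube-like w.r.t. $(I,J)$ if $\bm x\sim X$ (uniform) is $(I,\gamma)$-structured and $\bm y\sim Y$ is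 $(J,\gamma)$-structured; write $\mathrm{fix}(X)=I$, $\mathrm{fix}(Y)=J$ and $\mathrm{codim}(X\times Y)=|I|+|J|$. A protocol is $\gamma$-subcube-like if every node rectangle is $\gamma$-subcube-like; its codimension is the maximum codimension of its node rectangles. *)

From HB Require Import structures.
From mathcomp Require Import all_boot all_order all_algebra.
From mathcomp Require Import reals sequences exp.
Set Implicit Arguments. Unset Strict Implicit. Unset Printing Implicit Defensive.
Import Order.TTheory GRing.Theory Num.Theory.
Local Open Scope ring_scope.

Definition bits (n : nat) := {ffun 'I_n -> bool}.

Inductive dproto (n : nat) (O : Type) : Type :=
| DLeaf  of O
| DAlice of (bits n -> bool) & dproto n O & dproto n O  (* Alice sends f(x): false -> 1st, true -> 2nd *)
| DBob   of (bits n -> bool) & dproto n O & dproto n O. (* Bob sends g(y) *)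

Fixpoint ddepth n O (p : dproto n O) : nat :=
  match p with
  | DLeaf _ => 0
  | DAlice _ p0 p1 | DBob _ p0 p1 => (maxn (ddepth p0) (ddepth p1)).+1
  end.

Fixpoint deval n O (p : dproto n O) (x y : bits n) : O :=
  match p with
  | DLeaf o => o
  | DAlice f p0 p1 => if f x then deval p1 x y else deval p0 x y
  | DBob g p0 p1 => if g y then deval p1 x y else deval p0 x y
  end.

(* Every node carries its rectangle X_v x Y_v; internal nodes record who speaks
   (true = Alice) and have an arbitrary (finite, nonempty) list of children. *)
Inductive gproto (n : nat) (O : Type) : Type :=
| GLeaf of {set bits n} & {set bits n} & O
| GNode of {set bits n} & {set bits n} & bool & seq (gproto n O).

Definition rX n O (p : gproto n O) : {set bits n} :=
  match p with GLeaf X _ _ | GNode X _ _ _ => X end.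
Definition rY n O (p : gproto n O) : {set bits n} :=
  match p with GLeaf _ Y _ | GNode _ Y _ _ => Y end.

Fixpoint gwf n O (p : gproto n O) : Prop :=
  match p with
  | GLeaf _ _ _ => True
  | GNode X Y a cs =>
      cs <> [::] /\
      pairwise (fun c1 c2 : gproto n O =>
                  if a then [disjoint rX c1 & rX c2] else [disjoint rY c1 & rY c2]) cs /\
      (fix aux (l : seq (gproto n O)) : Prop :=
         match l with
         | [::] => True
         | c :: l' =>
             (if a then rY c = Y /\ rX c \subset X else rX c = X /\ rY c \subset Y)
             /\ gwf c /\ aux l'
         end) cs
  end.

Fixpoint gdepth n O (p : gproto n O) : nat :=
  match p with
  | GLeaf _ _ _ => 0
  | GNode _ _ _ cs =>
      ((fix aux (l : seq (gproto n O)) : nat :=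
          match l with [::] => 0 | c :: l' => maxn (gdepth c) (aux l') end) cs).+1
  end.

Fixpoint gall n O (P : {set bits n} -> {set bits n} -> Prop) (p : gproto n O) : Prop :=
  match p with
  | GLeaf X Y _ => P X Y
  | GNode X Y _ cs =>
      P X Y /\
      (fix aux (l : seq (gproto n O)) : Prop :=
         match l with [::] => True | c :: l' => gall P c /\ aux l' end) cs
  end.

Fixpoint gmax n O (f : {set bits n} -> {set bits n} -> nat) (p : gproto n O) : nat :=
  match p with
  | GLeaf X Y _ => f X Y
  | GNode X Y _ cs =>
      maxn (f X Y)
        ((fix aux (l : seq (gproto n O)) : nat :=
            match l with [::] => 0 | c :: l' => maxn (gmax f c) (aux l') end) cs)
  end.

Fixpoint geval n O (p : gproto n O) (x y : bits n) : option O :=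
  if (x \in rX p) && (y \in rY p) then
    match p with
    | GLeaf _ _ o => Some o
    | GNode _ _ _ cs =>
        (fix aux (l : seq (gproto n O)) : option O :=
           match l with
           | [::] => None
           | c :: l' => if geval c x y is Some o then Some o else aux l'
           end) cs
    end
  else None.

Section Entropy.
Variables (R : realType) (n : nat).

Definition prob_restr (X : {set bits n}) (S : {set 'I_n}) (a : bits n) : R :=
  #|[set x in X | [forall i in S, x i == a i]]|%:R / #|X|%:R.

(* H_oo(x_S) >= c, for x uniform on X : min over the values v of x_S in the
   support of log2 (1 / Pr[x_S = v]) is >= c (every support value arises as a_S
   for some a in X). *)
Definition minent_ge (X : {set bits n}) (S : {set 'I_n}) (c : R) : Prop :=
  forall a, a \in X -> c <= ln ((prob_restr X S a)^-1) / ln 2.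

Definition spread_on (X : {set bits n}) (K : {set 'I_n}) (gamma : R) : Prop :=
  forall S : {set 'I_n}, S \subset K -> minent_ge X S (gamma * #|S|%:R).

Definition structured (X : {set bits n}) (I : {set 'I_n}) (gamma : R) : Prop :=
  X != set0 /\
  (exists a : bits n, forall x, x \in X -> forall i, i \in I -> x i = a i) /\
  spread_on X (~: I) gamma.

Definition subcube_like (X Y : {set bits n}) (gamma : R) : Prop :=
  exists I J : {set 'I_n}, structured X I gamma /\ structured Y J gamma.

End Entropy.

(* fix(X): the coordinates that are constant on X (for gamma > 0 and X
   (I,gamma)-structured this is exactly I). *)
Definition fixset n (X : {set bits n}) : {set 'I_n} :=
  [set i | [forall x in X, forall x' in X, x i == x' i]].

Definition codim n (X Y : {set bits n}) : nat := #|fixset X| + #|fixset Y|.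

Definition gsubcube_like (R : realType) n O (gamma : R) (p : gproto n O) : Prop :=
  gall (fun X Y => subcube_like X Y gamma) p.

Definition gcodim n O (p : gproto n O) : nat := gmax (@codim n) p.

Definition disagree_prob (R : realType) n (O : eqType) (P : dproto n O) (Q : gproto n O) : R :=
  #|[set xy : bits n * bits n | geval Q xy.1 xy.2 != Some (deval P xy.1 xy.2)]|%:R
  / #|[set: bits n * bits n]|%:R.

(* Build the approximating protocol top-down, keeping the invariant
   that every rectangle X x Y is subcube-like and dense:
   beta ^ codim * 2 ^ (2n) <= M |X| |Y|  with  beta = 2 ^ (- gamma).
   At a node of Pi where Alice speaks, split X according to her message; inside each
   part T, repeatedly cut out a maximal restriction P of T that fixes some coordinates
   and is gamma-spread on the others (a density increment: P keeps a beta ^ k fraction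
   of T for k newly fixed coordinates), recurse on P x Y, and discard what is left of T
   once T x Y is no longer dense.  Bob's nodes are Alice's nodes of the transposed
   protocol.  Density bounds the codimension by log2 M / (1 - gamma), and the discarded
   mass obeys an error budget that grows by a factor sqrt 8 per level of Pi; with
   M = 2 ^ (7d) the codimension is at most 7d / (1 - gamma) and the total error is at
   most sqrt 8 ^ d * 2 ^ (-7d/2) = 4 ^ (-d) <= e ^ (-d). *)

From Pilot Require Import Defs.
From HB Require Import structures.
From mathcomp Require Import all_boot all_order all_algebra.
From mathcomp Require Import reals sequences exp.
From mathcomp Require Import ring lra.
Import Order.TTheory GRing.Theory Num.Theory.
Local Open Scope ring_scope.
Set Implicit Arguments. Unset Strict Implicit. Unset Printing Implicit Defensive.

Section SqrtInequalities.
Variable R : rcfType.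
Implicit Types p t a b q r m N : R.

Lemma sqrt_peel p t : 0 < p <= t ->
  p / Num.sqrt t + 2 * Num.sqrt (t - p) <= 2 * Num.sqrt t.
Proof.
case/andP=> p_gt0 p_le_t; have t_gt0 := lt_le_trans p_gt0 p_le_t.
have u_gt0 : 0 < Num.sqrt t by rewrite sqrtr_gt0.
have tE : Num.sqrt t ^+ 2 = t by rewrite sqr_sqrtr // ltW.
have sE : Num.sqrt (t - p) ^+ 2 = t - p by rewrite sqr_sqrtr // subr_ge0.
have s_ge0 := sqrtr_ge0 (t - p).
rewrite -(ler_pM2r u_gt0) mulrDl mulfVK ?gt_eqF //.
set u := Num.sqrt t in u_gt0 tE *; set s := Num.sqrt (t - p) in sE s_ge0 *.
have : 0 <= (u - s) ^+ 2 by rewrite sqr_ge0.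
nra.
Qed.

Lemma sqrt8_add a b : 0 <= a -> 0 <= b ->
  2 * Num.sqrt a + 2 * Num.sqrt b <= Num.sqrt 8 * Num.sqrt (a + b).
Proof.
move=> a_ge0 b_ge0; have sa := sqrtr_ge0 a; have sb := sqrtr_ge0 b.
rewrite -sqrtrM ?ler0n // -[leLHS]ger0_norm ?addr_ge0 ?mulr_ge0 //.
rewrite -sqrtr_sqr ler_sqrt ?mulr_ge0 ?addr_ge0 //.
have aE : Num.sqrt a ^+ 2 = a by rewrite sqr_sqrtr.
have bE : Num.sqrt b ^+ 2 = b by rewrite sqr_sqrtr.
have : 0 <= (Num.sqrt a - Num.sqrt b) ^+ 2 by rewrite sqr_ge0.
nra.
Qed.

Lemma le_mul_sqrt_of_lt q r m N : 0 <= q -> 0 < m -> 0 <= N ->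
  m * q < r * N ^+ 2 -> q <= N / Num.sqrt m * Num.sqrt (r * q).
Proof.
move=> q_ge0 m_gt0 N_ge0 lt_mq.
have r_ge0 : 0 <= r.
  have := le_lt_trans (mulr_ge0 (ltW m_gt0) q_ge0) lt_mq.
  have := sqr_ge0 N; nra.
have sm_gt0 : 0 < Num.sqrt m by rewrite sqrtr_gt0.
have le_sq : Num.sqrt q * Num.sqrt m <= N * Num.sqrt r.
  rewrite -sqrtrM // -[N]ger0_norm // -sqrtr_sqr -sqrtrM ?sqr_ge0 //.
  by rewrite ler_sqrt ?mulr_ge0 ?sqr_ge0 // mulrC [_ * r]mulrC ltW.
rewrite sqrtrM // mulrA -{1}[q]sqr_sqrtr // expr2 ler_wpM2r ?sqrtr_ge0 //.
by rewrite mulrAC ler_pdivlMr.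
Qed.

End SqrtInequalities.

Fixpoint allp (T : Type) (P : T -> Prop) (s : seq T) : Prop :=
  if s is x :: s' then P x /\ allp P s' else True.

Lemma allp_cat T (P : T -> Prop) s1 s2 :
  allp P s1 -> allp P s2 -> allp P (s1 ++ s2).
Proof. by elim: s1 => [_|x s IHs [Px /IHs IHs2] /IHs2] //=. Qed.

Lemma sub_allp T (P Q : T -> Prop) s :
  (forall x, P x -> Q x) -> allp P s -> allp Q s.
Proof. by move=> PQ; elim: s => [|x s IHs [/PQ Qx /IHs]] //=. Qed.

Lemma allp_map T U (f : T -> U) (P : U -> Prop) s :
  allp P (map f s) <-> allp (fun x => P (f x)) s.
Proof. by elim: s => //= x s ->. Qed.

Section GprotoInd.
Variables (n : nat) (O : Type) (P : gproto n O -> Prop).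
Hypothesis P_leaf : forall X Y o, P (GLeaf X Y o).
Hypothesis P_node : forall X Y a cs, allp P cs -> P (GNode X Y a cs).

Fixpoint gproto_nested_ind (p : gproto n O) : P p :=
  match p with
  | GLeaf X Y o => P_leaf X Y o
  | GNode X Y a cs =>
      P_node X Y a
        ((fix all_cs (cs : seq (gproto n O)) : allp P cs :=
            if cs is c :: cs' then conj (gproto_nested_ind c) (all_cs cs') else I) cs)
  end.

End GprotoInd.

Section GprotoNodes.
Variables (n : nat) (O : Type).
Implicit Types (X Y : {set bits n}) (p c : gproto n O) (cs : seq (gproto n O)).

Definition child_rect (a : bool) X Y c :=
  if a then rY c = Y /\ rX c \subset X else rX c = X /\ rY c \subset Y.

Definition disjoint_side (a : bool) c1 c2 :=
  if a then [disjoint rX c1 & rX c2] else [disjoint rY c1 & rY c2].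

Lemma gwf_node X Y a cs :
  gwf (GNode X Y a cs) <->
  [/\ cs <> [::], pairwise (disjoint_side a) cs &
      allp (fun c => child_rect a X Y c /\ gwf c) cs].
Proof.
rewrite /=; split=> [[ne [pw wf]]|[ne pw wf]]; do ?split=> //;
  by elim: cs {ne pw} wf => //= c cs IH; rewrite /child_rect; tauto.
Qed.

Lemma gall_node (P : {set bits n} -> {set bits n} -> Prop) X Y a cs :
  gall P (GNode X Y a cs) <-> P X Y /\ allp (gall P) cs.
Proof. by rewrite /=; split=> -[PXY all_cs]; split=> //; elim: cs all_cs => //= c cs; tauto. Qed.

Lemma sub_gall (P Q : {set bits n} -> {set bits n} -> Prop) p :
  (forall X Y, P X Y -> Q X Y) -> gall P p -> gall Q p.
Proof.
move=> PQ; elim/gproto_nested_ind: p => [X Y o /PQ //|X Y a cs IHcs].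
rewrite !gall_node => -[/PQ QXY allP]; split=> //.
by elim: cs IHcs allP => //= c cs IH [IHc /IH IHcs] [/IHc Qc /IHcs].
Qed.

Lemma gdepth_node X Y a cs :
  gdepth (GNode X Y a cs) = (foldr (fun c m => maxn (gdepth c) m) 0 cs).+1.
Proof. by rewrite /=; elim: cs => //= c cs [->]. Qed.

Lemma gmax_node (f : {set bits n} -> {set bits n} -> nat) X Y a cs :
  gmax f (GNode X Y a cs) = maxn (f X Y) (foldr (fun c m => maxn (gmax f c) m) 0 cs).
Proof. by rewrite /=; congr maxn; elim: cs => //= c cs ->. Qed.

Lemma gmax_le (R : numDomainType) (f : {set bits n} -> {set bits n} -> nat)
    (P : {set bits n} -> {set bits n} -> Prop) (C : R) p :
  0 <= C -> (forall X Y, P X Y -> (f X Y)%:R <= C) -> gall P p ->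
  (gmax f p)%:R <= C.
Proof.
move=> C_ge0 fC; have maxC m1 m2 : m1%:R <= C -> m2%:R <= C -> (maxn m1 m2)%:R <= C.
  by case: leqP.
elim/gproto_nested_ind: p => [X Y o /fC //|X Y a cs IHcs /gall_node[/fC fXY allP]].
rewrite gmax_node; apply: (maxC) => //.
elim: cs IHcs allP => [_ _ //|c cs IH [IHc IHcs] [/IHc Hc Hcs]].
exact: maxC Hc (IH IHcs Hcs).
Qed.

Definition gevals cs (x y : bits n) : option O :=
  foldr (fun c r => if geval c x y is Some o then Some o else r) None cs.

Lemma geval_node X Y a cs x y :
  geval (GNode X Y a cs) x y = if (x \in X) && (y \in Y) then gevals cs x y else None.
Proof. by rewrite /=; case: ifP => // _; elim: cs => //= c cs ->. Qed.

Lemma geval_out p x y : ~~ ((x \in rX p) && (y \in rY p)) -> geval p x y = None.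
Proof. by case: p => [X Y o|X Y a cs] /= /negbTE ->. Qed.

Lemma gevals_cat cs1 cs2 x y :
  gevals (cs1 ++ cs2) x y = if gevals cs1 x y is Some o then Some o else gevals cs2 x y.
Proof. by elim: cs1 => //= c cs ->; case: (geval c x y). Qed.

Lemma gevals_outX cs (A : {set bits n}) x y :
  allp (fun c => rX c \subset A) cs -> x \notin A -> gevals cs x y = None.
Proof.
move=> csA xA; elim: cs csA => //= c cs IHcs [cA /IHcs ->]; rewrite geval_out //.
by apply: contra xA => /andP[/(subsetP cA)].
Qed.

(* Well-formed nodes have children; a node left without any becomes a leaf whose
   label [o] is irrelevant. *)
Definition gnode X Y a cs (o : O) : gproto n O :=
  if cs is [::] then GLeaf X Y o else GNode X Y a cs.

Lemma rX_gnode X Y a cs o : rX (gnode X Y a cs o) = X. Proof. by case: cs. Qed.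
Lemma rY_gnode X Y a cs o : rY (gnode X Y a cs o) = Y. Proof. by case: cs. Qed.

Lemma gwf_gnode X Y a cs o :
  pairwise (disjoint_side a) cs -> allp (fun c => child_rect a X Y c /\ gwf c) cs ->
  gwf (gnode X Y a cs o).
Proof. by case: cs => [//|c cs] pw_cs wf_cs; apply/gwf_node. Qed.

Lemma gall_gnode (P : {set bits n} -> {set bits n} -> Prop) X Y a cs o :
  P X Y -> allp (gall P) cs -> gall P (gnode X Y a cs o).
Proof. by case: cs => [//|c cs] PXY allP; apply/gall_node. Qed.

Lemma gdepth_gnode k X Y a cs o :
  allp (fun c => gdepth c <= k)%N cs -> (gdepth (gnode X Y a cs o) <= k.+1)%N.
Proof.
case: cs => [_ //|c cs]; rewrite gdepth_node ltnS.
by elim: (c :: cs) => [_|c' cs' IH [c'k /IH cs'k]] //=; rewrite geq_max c'k.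
Qed.

Lemma all_disjoint_rX (B A : {set bits n}) cs :
  [disjoint B & A] -> allp (fun c => rX c \subset A) cs ->
  all (fun c => [disjoint B & rX c]) cs.
Proof.
move=> BA; elim: cs => [//|c cs IHcs [cA /IHcs]] /= ->.
by rewrite andbT (disjointWr cA).
Qed.

Lemma allrel_disjoint_rX (A B : {set bits n}) cs0 cs1 :
  [disjoint A & B] -> allp (fun c => rX c \subset A) cs0 ->
  allp (fun c => rX c \subset B) cs1 -> allrel (disjoint_side true) cs0 cs1.
Proof.
move=> AB sub0 sub1; elim: cs0 sub0 => [//|c cs IHcs [cA /IHcs]].
by rewrite allrel_consl => ->; rewrite andbT (all_disjoint_rX _ sub1) // (disjointWl cA).
Qed.

End GprotoNodes.

Section Transpose.
Variables (n : nat) (O : Type).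
Implicit Types (X Y : {set bits n}) (p c : gproto n O) (cs : seq (gproto n O)).

Fixpoint dtranspose (P : dproto n O) : dproto n O :=
  match P with
  | DLeaf o => DLeaf n o
  | DAlice f P0 P1 => DBob f (dtranspose P0) (dtranspose P1)
  | DBob g P0 P1 => DAlice g (dtranspose P0) (dtranspose P1)
  end.

Lemma ddepth_dtranspose P : ddepth (dtranspose P) = ddepth P.
Proof. by elim: P => //= f P0 -> P1 ->. Qed.

Lemma deval_dtranspose P x y : deval (dtranspose P) y x = deval P x y.
Proof. by elim: P => //= f P0 -> P1 ->. Qed.

Fixpoint gtranspose p : gproto n O :=
  match p with
  | GLeaf X Y o => GLeaf Y X o
  | GNode X Y a cs => GNode Y X (~~ a) (map gtranspose cs)
  end.

Lemma rX_gtranspose p : rX (gtranspose p) = rY p. Proof. by case: p. Qed.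
Lemma rY_gtranspose p : rY (gtranspose p) = rX p. Proof. by case: p. Qed.

Lemma gwf_gtranspose p : gwf p -> gwf (gtranspose p).
Proof.
elim/gproto_nested_ind: p => [//|X Y a cs IHcs /gwf_node[cs_neq0 pw_cs wf_cs]].
apply/gwf_node; split; first by case: (cs) cs_neq0.
  rewrite pairwise_map; apply: sub_pairwise pw_cs => c1 c2.
  by rewrite /disjoint_side /= !rX_gtranspose !rY_gtranspose; case: (a).
apply/allp_map; elim: cs IHcs wf_cs {cs_neq0 pw_cs} => [//|c cs IH].
move=> [IHc IHcs] [[rc wfc] /(IH IHcs)]; split=> //; split; last exact: IHc.
by move: rc; rewrite /child_rect rX_gtranspose rY_gtranspose; case: (a).
Qed.

Lemma gall_gtranspose (P : {set bits n} -> {set bits n} -> Prop) p :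
  gall (fun X Y => P Y X) p -> gall P (gtranspose p).
Proof.
elim/gproto_nested_ind: p => [//|X Y a cs IHcs /gall_node[PYX allP]].
apply/gall_node; split=> //; apply/allp_map.
by elim: cs IHcs allP => [//|c cs IH [IHc IHcs] [/IHc Pc /(IH IHcs)]].
Qed.

Lemma gdepth_gtranspose p : gdepth (gtranspose p) = gdepth p.
Proof.
elim/gproto_nested_ind: p => [//|X Y a cs IHcs].
rewrite /gtranspose -/gtranspose !gdepth_node foldr_map.
by congr _.+1; elim: cs IHcs => [//|c cs IH] /= [-> /IH ->].
Qed.

Lemma geval_gtranspose p x y : geval (gtranspose p) y x = geval p x y.
Proof.
elim/gproto_nested_ind: p => [X Y o|X Y a cs IHcs]; first by rewrite /= andbC.
rewrite /gtranspose -/gtranspose !geval_node andbC; case: ifP => // _.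
by elim: cs IHcs => [//|c cs IH [IHc /IH]] /= ->; rewrite IHc.
Qed.

End Transpose.

Section Errors.
Variables (n : nat) (O : eqType).
Implicit Types (X Y A B T : {set bits n}) (p c : gproto n O) (cs : seq (gproto n O)).
Implicit Types (e : bits n -> bits n -> option O) (v : bits n -> bits n -> O).

Definition errors e v A B : {set bits n * bits n} :=
  [set xy in setX A B | e xy.1 xy.2 != Some (v xy.1 xy.2)].

Lemma card_errors e v A B : (#|errors e v A B| <= #|A| * #|B|)%N.
Proof.
by rewrite -cardsX subset_leq_card //; apply/subsetP => xy; rewrite inE => /andP[].
Qed.

Lemma card_errors_swap e e' v v' A B :
  (forall x y, e' x y = e y x) -> (forall x y, v' x y = v y x) ->
  #|errors e' v' A B| = #|errors e v B A|.
Proof.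
move=> ee' vv'; rewrite -(card_imset (errors e v B A) (can_inj (@swap_pairK _ _))).
rewrite (can2_imset_pre _ (@swap_pairK _ _) (@swap_pairK _ _)).
by apply: eq_card => -[x y]; rewrite !inE /= ee' vv' [(x \in A) && _]andbC.
Qed.

Lemma errors_gnode v X Y a cs o :
  errors (geval (gnode X Y a cs o)) v X Y \subset errors (gevals cs) v X Y.
Proof.
apply/subsetP => -[x y]; case: cs => [|c cs]; rewrite !inE /gnode.
  by rewrite /= andbT => /andP[].
by rewrite geval_node /= => /andP[/andP[-> ->]].
Qed.

Lemma errors_gevals_cons v c cs T Y :
  rY c = Y ->
  errors (gevals (c :: cs)) v T Y
    \subset errors (geval c) v (rX c) Y :|: errors (gevals cs) v (T :\: rX c) Y.
Proof.
move=> rYc; apply/subsetP => -[x y]; rewrite !inE /= => /andP[/andP[xT yY]].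
case xc: (x \in rX c); last by rewrite geval_out ?xc // xT yY => ->; rewrite orbT.
by rewrite yY /=; case: (geval c x y) => [o|] // ->.
Qed.

End Errors.

Section Restriction.
Variable n : nat.
Implicit Types (X T : {set bits n}) (S : {set 'I_n}) (a : bits n).

Definition restr T S a := [set x in T | [forall i in S, x i == a i]].

Lemma restr_sub T S a : restr T S a \subset T.
Proof. by apply/subsetP => x; rewrite inE => /andP[]. Qed.

Lemma mem_restr T S a : a \in T -> a \in restr T S a.
Proof. by move=> aT; rewrite inE aT; apply/forall_inP. Qed.

Lemma restr0 T a : restr T set0 a = T.
Proof. by apply/setP => x; rewrite inE andb_idr // => _; apply/forall_inP => i; rewrite inE. Qed.

Lemma card_restrT S a : (#|restr [set: bits n] S a| * 2 ^ #|S| = 2 ^ n)%N.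
Proof.
pose F i := if i \in S then pred1 (a i) else predT.
have -> : #|restr [set: bits n] S a| = #|family F|.
  apply: eq_card => x; rewrite !inE /=.
  apply/forall_inP/forallP => [xS i|xF i iS]; rewrite /F.
    by case: ifP => iS; rewrite inE ?xS.
  by have := xF i; rewrite /F iS inE.
rewrite card_family foldrE big_map big_enum /= (bigID (mem S)) /=.
rewrite (eq_bigr (fun _ => 1%N)); last by move=> i iS; rewrite /F iS card1.
rewrite (eq_bigr (fun _ => 2%N) (P := fun i => i \notin S)); last first.
  by move=> i /negbTE iS; rewrite /F iS card_bool.
rewrite !prod_nat_const exp1n mul1n -expnD; congr (2 ^ _)%N.
by rewrite -[RHS](card_ord n) -(cardC (mem S)) addnC.
Qed.

Lemma fixsetS X T : T \subset X -> Defs.fixset X \subset Defs.fixset T.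
Proof.
move=> TX; apply/subsetP => i; rewrite !inE => /forall_inP fixX.
apply/forall_inP => x xT; apply/forall_inP => y yT.
by have /forall_inP := fixX x (subsetP TX x xT); apply; apply: (subsetP TX).
Qed.

Lemma fixset_restr T S a : S \subset Defs.fixset (restr T S a).
Proof.
apply/subsetP => i iS; rewrite inE; apply/forall_inP => x /[!inE] /andP[_ /forall_inP xS].
by apply/forall_inP => y /[!inE] /andP[_ /forall_inP yS]; rewrite (eqP (xS i iS)) (eqP (yS i iS)).
Qed.

Lemma fixsetP X x y i : x \in X -> y \in X -> i \in Defs.fixset X -> x i = y i.
Proof. by move=> xX yX; rewrite inE => /forall_inP /(_ x xX) /forall_inP /(_ y yX) /eqP. Qed.

Lemma card_fixset X : (#|X| * 2 ^ #|Defs.fixset X| <= 2 ^ n)%N.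
Proof.
have [->|[a aX]] := set_0Vmem X; first by rewrite cards0.
rewrite -(card_restrT (Defs.fixset X) a) leq_mul2r; apply/orP; right.
apply: subset_leq_card; apply/subsetP => x xX; rewrite !inE /=.
by apply/forall_inP => i iF; rewrite (fixsetP xX aX iF).
Qed.

End Restriction.

Section Construction.
Variables (R : realType) (gamma : R) (n : nat).
Hypothesis gamma01 : 0 < gamma < 1.
Implicit Types (X Y T P : {set bits n}) (S F : {set 'I_n}) (a b : bits n).

(* A probability at most [beta ^+ k] means min-entropy at least [gamma * k]. *)
Definition beta : R := expR (- (gamma * ln 2)).

Lemma ln2_gt0 : 0 < ln (2 : R).
Proof. by rewrite ln_gt0 // ltr1n. Qed.

Lemma beta_gt0 : 0 < beta. Proof. exact: expR_gt0. Qed.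

Lemma beta_le1 : beta <= 1.
Proof.
rewrite /beta expR_le1 oppr_le0 mulr_ge0 // ltW //; last exact: ln2_gt0.
by case/andP: gamma01.
Qed.

Lemma half_le_beta : 2^-1 <= beta.
Proof.
have -> : 2^-1 = expR (- ln 2) :> R by rewrite expRN lnK // posrE.
rewrite /beta ler_expR lerN2.
by rewrite ger_pMl ?ln2_gt0 //; case/andP: gamma01 => _ /ltW.
Qed.

Lemma spread_on_restr X (K : {set 'I_n}) :
  (forall S a, S \subset K -> a \in X -> #|restr X S a|%:R <= beta ^+ #|S| * #|X|%:R) ->
  spread_on X K gamma.
Proof.
move=> small S SK a aX.
have ra_gt0 : (0 < #|restr X S a|)%N by apply/card_gt0P; exists a; exact: mem_restr.
have X_gt0 : (0 < #|X|)%N by apply/card_gt0P; exists a.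
have p_gt0 : 0 < prob_restr R X S a by rewrite divr_gt0 ?ltr0n.
rewrite ler_pdivlMr ?ln2_gt0 // lnV ?posrE //.
have : ln (prob_restr R X S a) <= ln (beta ^+ #|S|).
  by rewrite ler_ln ?posrE ?exprn_gt0 ?beta_gt0 // ler_pdivrMr ?ltr0n // small.
by rewrite /beta -expRM_natl expRK; lra.
Qed.

Definition heavy T F (p : {set 'I_n} * bits n) :=
  [&& p.1 \subset ~: F, p.2 \in T & beta ^+ #|p.1| * #|T|%:R <= #|restr T p.1 p.2|%:R].

Lemma spread_restr_max_heavy T F S a :
  heavy T F (S, a) -> (forall p, heavy T F p -> (#|p.1| <= #|S|)%N) ->
  F \subset Defs.fixset (restr T S a) ->
  spread_on (restr T S a) (~: Defs.fixset (restr T S a)) gamma.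
Proof.
move=> /and3P[/= SF aT heavyS] maxS FP; set P := restr T S a.
apply: spread_on_restr => S' b S'P bP; rewrite leNgt; apply/negP => heavyS'.
have S'F : S' \subset ~: F by rewrite (subset_trans S'P) // setCS.
have S'S : S' \subset ~: S by rewrite (subset_trans S'P) // setCS fixset_restr.
have cardSS' : #|S :|: S'| = (#|S| + #|S'|)%N.
  by apply/eqP; rewrite (leq_card_setU S S').2 disjoint_sym disjoints_subset.
suff /maxS : heavy T F (S :|: S', b).
  rewrite /= cardSS' -[leqRHS]addn0 leq_add2l leqn0 cards_eq0 => /eqP S'0.
  by move: heavyS'; rewrite S'0 cards0 expr0 mul1r restr0 ltxx.
rewrite /heavy /= subUset SF S'F (subsetP (restr_sub T S a)) //= cardSS' exprD.
rewrite mulrAC mulrC; apply: le_trans (ler_wpM2l (exprn_ge0 _ (ltW beta_gt0)) heavyS) _.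
rewrite (le_trans (ltW heavyS')) // ler_nat subset_leq_card //.
apply/subsetP => x /[!inE] /andP[/andP[xT /forall_inP xS] /forall_inP xS'].
rewrite xT; apply/forall_inP => i /[!inE] /orP[iS|]; last exact: xS'.
by move: bP => /[!inE] /andP[_ /forall_inP bS]; rewrite (eqP (xS i iS)) (eqP (bS i iS)).
Qed.

Lemma exists_structured_restr X T : T \subset X -> T != set0 ->
  exists2 P : {set bits n}, P \subset T /\ P != set0 &
    structured P (Defs.fixset P) gamma /\
    beta ^+ #|Defs.fixset P| * #|T|%:R <= beta ^+ #|Defs.fixset X| * #|P|%:R.
Proof.
move=> TX /set0Pn[t tT].
have heavy0 : heavy T (Defs.fixset X) (set0, t).
  by rewrite /heavy /= sub0set tT cards0 expr0 mul1r restr0 lexx.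
have [[S a] heavySa maxS] := arg_maxnP (fun p : {set 'I_n} * bits n => #|p.1|) heavy0.
have /and3P[/= SF aT heavyS] := heavySa; set P := restr T S a.
have aP : a \in P by exact: mem_restr.
have FP : Defs.fixset X \subset Defs.fixset P.
  exact/fixsetS/(subset_trans (restr_sub T S a)).
have P_neq0 : P != set0 by apply/set0Pn; exists a.
exists P; first by split; first exact: (restr_sub T S a).
split.
  split=> //; split; first by exists a => x xP i; exact: fixsetP.
  exact: spread_restr_max_heavy heavySa maxS FP.
have cardFS : (#|Defs.fixset X| + #|S| <= #|Defs.fixset P|)%N.
  have -> : (#|Defs.fixset X| + #|S|)%N = #|Defs.fixset X :|: S|.
    by apply/esym/eqP; rewrite (leq_card_setU _ _).2 disjoint_sym disjoints_subset.
  by rewrite subset_leq_card // subUset FP fixset_restr.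
rewrite (le_trans (ler_wpM2r (ler0n _ _) (ler_wiXn2l (ltW beta_gt0) beta_le1 cardFS))) //.
by rewrite exprD -mulrA ler_wpM2l ?exprn_ge0 ?(ltW beta_gt0).
Qed.

Variable M : R.
Hypothesis M_gt0 : 0 < M.

Definition N : R := (2 ^ n)%:R.

Lemma N_gt0 : 0 < N. Proof. by rewrite ltr0n expn_gt0. Qed.

Definition dense_rect X Y := beta ^+ codim X Y * N ^+ 2 <= M * (#|X|%:R * #|Y|%:R).

Lemma codimC X Y : codim X Y = codim Y X. Proof. by rewrite /codim addnC. Qed.

Lemma dense_rectC X Y : dense_rect X Y -> dense_rect Y X.
Proof. by rewrite /dense_rect codimC [_ * #|Y|%:R]mulrC. Qed.

Lemma dense_rect_codim X Y :
  dense_rect X Y -> (codim X Y)%:R <= ln M / ((1 - gamma) * ln 2).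
Proof.
move=> dXY; set c := codim X Y; have [_ gamma_lt1] := andP gamma01.
have card_c : (#|X| * #|Y| * 2 ^ c <= 2 ^ n * 2 ^ n)%N.
  by rewrite /c /codim expnD mulnACA leq_mul ?card_fixset.
have pow_c : (2 * beta) ^+ c <= M.
  rewrite -(ler_pM2r (exprn_gt0 2 N_gt0)) exprMn -mulrA.
  apply: le_trans (ler_wpM2l (exprn_ge0 _ (ler0n _ 2)) dXY) _.
  rewrite mulrCA; apply: ler_wpM2l; first exact: ltW.
  by rewrite mulrC /N -!natrX -!natrM ler_nat; exact: card_c.
have two_beta : 2 * beta = expR ((1 - gamma) * ln 2).
  by rewrite mulrBl mul1r expRD lnK ?posrE // /beta mulNr.
rewrite ler_pdivlMr ?mulr_gt0 ?subr_gt0 ?ln2_gt0 // -ler_expR lnK ?posrE //.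
by rewrite expRM_natl -two_beta.
Qed.

Lemma dense_rect_restr X Y P T :
  beta ^+ #|Defs.fixset P| * #|T|%:R <= beta ^+ #|Defs.fixset X| * #|P|%:R ->
  (0 < #|T|)%N -> beta ^+ codim X Y * N ^+ 2 <= M * (#|T|%:R * #|Y|%:R) ->
  dense_rect P Y /\ beta ^+ codim P Y * #|T|%:R <= beta ^+ codim X Y * #|P|%:R.
Proof.
move=> incr T_gt0 dense_T.
have incrY : beta ^+ codim P Y * #|T|%:R <= beta ^+ codim X Y * #|P|%:R.
  rewrite /codim !exprD [_ * _ * #|T|%:R]mulrAC [_ * _ * #|P|%:R]mulrAC.
  by rewrite ler_wpM2r ?exprn_ge0 // ltW ?beta_gt0.
have T_gt0' : 0 < #|T|%:R :> R by rewrite ltr0n.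
split=> //; rewrite /dense_rect -(ler_pM2r T_gt0').
rewrite mulrAC (le_trans (ler_wpM2r (exprn_ge0 2 (ltW N_gt0)) incrY)) //.
rewrite mulrAC (le_trans (ler_wpM2r (ler0n R #|P|) dense_T)) //.
by rewrite [leRHS](_ : _ = M * (#|T|%:R * #|Y|%:R) * #|P|%:R) //; ring.
Qed.

(* The square root makes the budget add up along the greedy partition
   (err_bound_split), and the factor [sqrt 8] per level pays for Alice's split
   (err_bound_node). *)
Definition err_bound k c (a b : R) :=
  Num.sqrt 8 ^+ k * (N / Num.sqrt M) * Num.sqrt (beta ^+ c * (a * b)).

Lemma err_bound_scale_ge0 k : 0 <= Num.sqrt 8 ^+ k * (N / Num.sqrt M).
Proof. exact: mulr_ge0 (exprn_ge0 _ (sqrtr_ge0 _)) (divr_ge0 (ltW N_gt0) (sqrtr_ge0 _)). Qed.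

Lemma err_bound_ge0 k c (a b : R) : 0 <= err_bound k c a b.
Proof. by rewrite mulr_ge0 ?sqrtr_ge0 ?err_bound_scale_ge0. Qed.

Lemma err_boundC k c (a b : R) : err_bound k c a b = err_bound k c b a.
Proof. by rewrite /err_bound [a * b]mulrC. Qed.

Lemma err_bound_sparse k c (a b : R) : 0 <= a * b ->
  M * (a * b) < beta ^+ c * N ^+ 2 -> a * b <= err_bound k c a b.
Proof.
move=> ab_ge0 sparse; apply: le_trans (le_mul_sqrt_of_lt ab_ge0 M_gt0 (ltW N_gt0) sparse) _.
rewrite /err_bound -[leRHS]mulrA; apply: ler_peMl.
  exact: mulr_ge0 (divr_ge0 (ltW N_gt0) (sqrtr_ge0 _)) (sqrtr_ge0 _).
by rewrite exprn_ege1 // -[leLHS]sqrtr1 ler_sqrt //; lra.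
Qed.

Lemma err_bound_split k c c' (p t y : R) : 0 < p <= t -> 0 <= y ->
  beta ^+ c' * t <= beta ^+ c * p ->
  err_bound k c' p y + 2 * err_bound k c (t - p) y <= 2 * err_bound k c t y.
Proof.
move=> p_in y_ge0 le_ct; have /andP[p_gt0 p_le_t] := p_in.
have t_gt0 := lt_le_trans p_gt0 p_le_t.
have bc_ge0 := exprn_ge0 c (ltW beta_gt0); have bc'_ge0 := exprn_ge0 c' (ltW beta_gt0).
set B := Num.sqrt (beta ^+ c * y); have B_ge0 : 0 <= B := sqrtr_ge0 _.
have sqrtE s : 0 <= s -> Num.sqrt (beta ^+ c * (s * y)) = Num.sqrt s * B.
  by move=> s_ge0; rewrite mulrCA sqrtrM.
have le_p : Num.sqrt (beta ^+ c' * (p * y)) <= p / Num.sqrt t * B.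
  have p2t_ge0 : 0 <= p ^+ 2 / t by rewrite divr_ge0 ?sqr_ge0 ?ltW.
  have -> : p / Num.sqrt t = Num.sqrt (p ^+ 2 / t).
    by rewrite sqrtrM ?sqr_ge0 // sqrtr_sqr ger0_norm ?sqrtrV // ltW.
  rewrite -sqrtE // ler_sqrt; last exact: mulr_ge0 bc_ge0 (mulr_ge0 p2t_ge0 y_ge0).
  have := ler_wpM2r (mulr_ge0 (divr_ge0 (ltW p_gt0) (ltW t_gt0)) y_ge0) le_ct.
  by congr (_ <= _); field; rewrite gt_eqF.
rewrite /err_bound; set A := Num.sqrt 8 ^+ k * (N / Num.sqrt M).
have A_ge0 : 0 <= A := err_bound_scale_ge0 k.
rewrite !sqrtE ?subr_ge0 ?(ltW t_gt0) //.
have := ler_wpM2l (mulr_ge0 A_ge0 B_ge0) (sqrt_peel p_in).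
have := ler_wpM2l A_ge0 le_p.
nra.
Qed.

Lemma err_bound_node k c (a0 a1 b : R) : 0 <= a0 -> 0 <= a1 -> 0 <= b ->
  2 * err_bound k c a0 b + 2 * err_bound k c a1 b <= err_bound k.+1 c (a0 + a1) b.
Proof.
move=> a0_ge0 a1_ge0 b_ge0; have bc_ge0 := exprn_ge0 c (ltW beta_gt0).
have := sqrt8_add (mulr_ge0 bc_ge0 (mulr_ge0 a0_ge0 b_ge0))
                  (mulr_ge0 bc_ge0 (mulr_ge0 a1_ge0 b_ge0)).
have -> : beta ^+ c * (a0 * b) + beta ^+ c * (a1 * b) = beta ^+ c * ((a0 + a1) * b).
  by ring.
move=> sqrt_sum; have := ler_wpM2l (err_bound_scale_ge0 k) sqrt_sum.
by rewrite /err_bound exprSr; nra.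
Qed.

Variable O : eqType.

Definition good X Y := subcube_like X Y gamma /\ dense_rect X Y.

Lemma goodC X Y : good X Y -> good Y X.
Proof. by case=> -[I [J [sX sY]]] /dense_rectC; split=> //; exists J, I. Qed.

Record approx_on k (v : bits n -> bits n -> O) X Y (Q : gproto n O) : Prop := ApproxOn {
  approx_rX : rX Q = X;
  approx_rY : rY Q = Y;
  approx_wf : gwf Q;
  approx_good : gall good Q;
  approx_depth : (gdepth Q <= k)%N;
  approx_errors :
    #|errors (geval Q) v X Y|%:R <= err_bound k (codim X Y) #|X|%:R #|Y|%:R }.

Definition approximable k := forall Pi : dproto n O, (ddepth Pi <= k)%N ->
  forall X Y, good X Y -> exists Q, approx_on k (deval Pi) X Y Q.

Lemma approx_on_leaf k o X Y :
  good X Y -> approx_on k (deval (DLeaf n o)) X Y (GLeaf X Y o).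
Proof.
move=> gXY; split=> //; rewrite (_ : errors _ _ _ _ = set0) ?cards0 ?err_bound_ge0 //.
by apply/setP => -[x y]; rewrite !inE /=; case: ifP => //= _; rewrite eqxx.
Qed.

Lemma approx_on_gtranspose k v v' X Y Q : (forall x y, v' x y = v y x) ->
  approx_on k v Y X Q -> approx_on k v' X Y (gtranspose Q).
Proof.
move=> vv' [QY QX wfQ gQ dQ eQ]; split.
- by rewrite rX_gtranspose.
- by rewrite rY_gtranspose.
- exact: gwf_gtranspose.
- by apply: gall_gtranspose; apply: sub_gall gQ => ? ? /goodC.
- by rewrite gdepth_gtranspose.
rewrite (card_errors_swap (e := geval Q) (v := v)) // => [|x y]; last exact: geval_gtranspose.
by rewrite codimC err_boundC.
Qed.

Definition alice_child k T Y (c : gproto n O) :=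
  [/\ child_rect true T Y c, gwf c, gall good c & (gdepth c <= k)%N].

Lemma alice_partition k (Pi : dproto n O) X Y T :
  approximable k -> (ddepth Pi <= k)%N -> subcube_like X Y gamma -> T \subset X ->
  exists cs, [/\ allp (alice_child k T Y) cs, pairwise (disjoint_side true) cs &
    #|errors (gevals cs) (deval Pi) T Y|%:R <= 2 * err_bound k (codim X Y) #|T|%:R #|Y|%:R].
Proof.
move=> IHk dP sXY; have [m] := ubnP #|T|; elim: m T => // m IHm T ltTm TX.
set c := codim X Y.
have [dense_T|sparse_T] := leP (beta ^+ c * N ^+ 2) (M * (#|T|%:R * #|Y|%:R)); last first.
  exists [::]; split=> //.
  apply: (@le_trans _ _ (#|T| * #|Y|)%:R); first by rewrite ler_nat card_errors.
  rewrite natrM (le_trans (err_bound_sparse k _ sparse_T)) ?mulr_ge0 ?ler0n //.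
  by rewrite ler_peMl ?err_bound_ge0 ?ler1n.
have T_gt0 : (0 < #|T|)%N.
  rewrite lt0n; apply: contraTneq dense_T => ->; rewrite mul0r mulr0 -ltNge.
  by rewrite mulr_gt0 ?exprn_gt0 ?beta_gt0 ?N_gt0.
have T_neq0 : T != set0 by rewrite -card_gt0.
have [P [PT P_neq0] [sP incrP]] := exists_structured_restr TX T_neq0.
have [dPY incr] := dense_rect_restr incrP T_gt0 dense_T.
have sPY : subcube_like P Y gamma by case: sXY => [I [J [_ sY]]]; exists (Defs.fixset P), J.
have [Q [QP QY wfQ gQ dQ eQ]] := IHk Pi dP P Y (conj sPY dPY).
have P_gt0 : (0 < #|P|)%N by rewrite card_gt0.
have cardTP : #|T :\: P| = (#|T| - #|P|)%N by rewrite cardsD (setIidPr PT).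
have [|cs [ch pw err]] := IHm (T :\: P) _ (subset_trans (subsetDl T P) TX).
  by rewrite cardTP -ltnS (leq_trans _ ltTm) // ltnS ltn_subrL P_gt0.
exists (Q :: cs); split.
- split; first by split=> //; split=> //; rewrite QP.
  apply: sub_allp ch => q [[qY qT] wq gq dq]; split=> //; split=> //.
  exact: subset_trans qT (subsetDl T P).
- rewrite /= pw andbT /disjoint_side QP; apply: (@all_disjoint_rX _ _ _ (T :\: P)).
    by rewrite disjoint_sym disjoints_subset setDE subsetIr.
  by apply: sub_allp ch => q [[]].
apply: (@le_trans _ _ (#|errors (geval Q) (deval Pi) P Y|
                       + #|errors (gevals cs) (deval Pi) (T :\: P) Y|)%:R).
  rewrite ler_nat (leq_trans _ (leq_card_setU _ _)) // subset_leq_card //.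
  by rewrite -QP errors_gevals_cons.
rewrite natrD (le_trans (lerD eQ err)) // cardTP natrB ?subset_leq_card //.
by apply: err_bound_split; rewrite ?ler0n // ltr0n P_gt0 ler_nat subset_leq_card.
Qed.

Lemma approx_alice k f (P0 P1 : dproto n O) X Y :
  approximable k -> (ddepth P0 <= k)%N -> (ddepth P1 <= k)%N -> good X Y ->
  exists Q, approx_on k.+1 (deval (DAlice f P0 P1)) X Y Q.
Proof.
move=> IHk dP0 dP1 [sXY dXY]; set F := [set x | f x].
have [cs0 [ch0 pw0 err0]] := alice_partition IHk dP0 sXY (subsetDl X F).
have [cs1 [ch1 pw1 err1]] := alice_partition IHk dP1 sXY (subsetIl X F).
have sub0 : allp (fun c => rX c \subset X :\: F) cs0 by apply: sub_allp ch0 => c [[]].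
have sub1 : allp (fun c => rX c \subset X :&: F) cs1 by apply: sub_allp ch1 => c [[]].
have ch : allp (alice_child k X Y) (cs0 ++ cs1).
  apply: allp_cat; [apply: sub_allp ch0|apply: sub_allp ch1] => c [[cY cT] *];
    by split=> //; split=> //; apply: subset_trans cT _; rewrite ?subsetDl ?subsetIl.
pose x0 : bits n := [ffun=> false].
exists (gnode X Y true (cs0 ++ cs1) (deval P0 x0 x0)); split.
- exact: rX_gnode.
- exact: rY_gnode.
- apply: gwf_gnode; last by apply: sub_allp ch => c [].
  rewrite pairwise_cat pw0 pw1 andbT (allrel_disjoint_rX _ sub0 sub1) //.
  by rewrite disjoint_sym disjoints_subset; apply/subsetP => x; rewrite !inE => /andP[_ ->].
- by apply: gall_gnode; [split|apply: sub_allp ch => c []].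
- by apply: gdepth_gnode; apply: sub_allp ch => c [].
have split_err : errors (gevals (cs0 ++ cs1)) (deval (DAlice f P0 P1)) X Y \subset
    errors (gevals cs0) (deval P0) (X :\: F) Y :|: errors (gevals cs1) (deval P1) (X :&: F) Y.
  apply/subsetP => -[x y]; rewrite !inE /= gevals_cat => /andP[/andP[xX yY]].
  rewrite xX yY; case fx: (f x).
    by rewrite (gevals_outX y sub0) ?inE ?fx //= => ->.
  rewrite (gevals_outX y sub1) ?inE ?fx ?andbF //=.
  by case: (gevals cs0 x y) => [o|] ->.
have cardX : (#|X :\: F| + #|X :&: F|)%N = #|X| by rewrite addnC cardsID.
apply: (@le_trans _ _ ((#|errors (gevals cs0) (deval P0) (X :\: F) Y|
                        + #|errors (gevals cs1) (deval P1) (X :&: F) Y|)%:R : R)).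
  rewrite ler_nat (leq_trans _ (leq_card_setU _ _)) // subset_leq_card //.
  exact: subset_trans (errors_gnode _ _ _ _ _ _) split_err.
rewrite natrD (le_trans (lerD err0 err1)) // -cardX natrD.
by apply: err_bound_node; rewrite ler0n.
Qed.

Lemma approximable_all k : approximable k.
Proof.
elim: k => [|k IHk] [o|f P0 P1|g P0 P1] dP X Y gXY.
- by exists (GLeaf X Y o); exact: approx_on_leaf.
- by rewrite ltn0 in dP.
- by rewrite ltn0 in dP.
- by exists (GLeaf X Y o); exact: approx_on_leaf.
- move: dP; rewrite /= ltnS geq_max => /andP[dP0 dP1].
  exact: approx_alice IHk dP0 dP1 gXY.
move: dP; rewrite /= ltnS geq_max -(ddepth_dtranspose P0) -(ddepth_dtranspose P1).
move=> /andP[dP0 dP1].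
have [Q QP] := approx_alice g IHk dP0 dP1 (goodC gXY).
by exists (gtranspose Q); apply: approx_on_gtranspose QP => x y /=; rewrite !deval_dtranspose.
Qed.

Lemma structured_setT : structured [set: bits n] set0 gamma.
Proof.
pose x0 : bits n := [ffun=> false].
split; first by apply/set0Pn; exists x0.
split; first by exists x0 => x _ i; rewrite inE.
apply: spread_on_restr => S a _ _; rewrite cardsT card_ffun card_bool card_ord.
have cardE : #|restr [set: bits n] S a|%:R = (2 ^ n)%:R * 2^-1 ^+ #|S| :> R.
  rewrite -(card_restrT S a) natrM natrX exprVn mulfK // expf_neq0 //.
  by rewrite pnatr_eq0.
rewrite cardE mulrC ler_wpM2r ?ler0n // lerXn2r ?nnegrE ?invr_ge0 ?ler0n //.
  exact: ltW beta_gt0.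
exact: half_le_beta.
Qed.

Lemma good_setT : 1 <= M -> good [set: bits n] [set: bits n].
Proof.
move=> M_ge1; split; first by exists set0, set0; split; exact: structured_setT.
rewrite /dense_rect cardsT card_ffun card_bool card_ord -/N -expr2.
rewrite ler_wpM2r ?exprn_ge0 ?(ltW N_gt0) // (le_trans _ M_ge1) //.
by rewrite exprn_ile1 ?beta_le1 // ltW ?beta_gt0.
Qed.

Lemma err_bound_setT k c : err_bound k c N N <= Num.sqrt 8 ^+ k / Num.sqrt M * N ^+ 2.
Proof.
have sqrt_le : Num.sqrt (beta ^+ c * (N * N)) <= N.
  rewrite -[leRHS]ger0_norm ?(ltW N_gt0) // -sqrtr_sqr expr2 ler_sqrt ?mulr_ge0 ?(ltW N_gt0) //.
  by rewrite ger_pMl ?mulr_gt0 ?N_gt0 // exprn_ile1 ?beta_le1 // ltW ?beta_gt0.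
apply: le_trans (ler_wpM2l (err_bound_scale_ge0 k) sqrt_le) _.
by rewrite le_eqVlt; apply/orP; left; apply/eqP; ring.
Qed.

Lemma gcodim_le (Q : gproto n O) : 1 <= M -> gall good Q ->
  (gcodim Q)%:R <= ln M / ((1 - gamma) * ln 2).
Proof.
move=> M_ge1; apply: gmax_le => [|X Y [_ /dense_rect_codim //]].
have [_ gamma_lt1] := andP gamma01.
by rewrite divr_ge0 ?ln_ge0 ?mulr_ge0 ?subr_ge0 ?(ltW gamma_lt1) ?(ltW ln2_gt0).
Qed.

End Construction.

Lemma disagree_probE (R : realType) n (O : eqType) (Pi : dproto n O) (Q : gproto n O) :
  disagree_prob R Pi Q =
  #|errors (geval Q) (deval Pi) [set: bits n] [set: bits n]|%:R / N R n ^+ 2.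
Proof.
rewrite /disagree_prob cardsT card_prod card_ffun card_bool card_ord natrM -expr2.
by congr (_%:R / _); apply: eq_card => xy; rewrite !inE.
Qed.

Lemma quarter_le_expRN1 (R : realType) : 4^-1 <= expR (-1 : R).
Proof.
have half : 2^-1 <= expR (- 2^-1 : R) by rewrite (le_trans _ (expR_ge1Dx _)) //; lra.
have -> : (-1 : R) = 2%:R * - 2^-1 by rewrite mulrN mulfV ?pnatr_eq0.
rewrite expRM_natl (_ : 4^-1 = 2^-1 ^+ 2 :> R); last by field.
by rewrite lerXn2r ?nnegrE ?invr_ge0 ?expR_ge0 ?ler0n.
Qed.

Lemma sqrt8_pow_le_expR (R : realType) d :
  Num.sqrt 8 ^+ d / Num.sqrt (2 ^+ (7 * d)) <= expR (- d%:R : R).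
Proof.
have sqrtX (x : R) k : 0 <= x -> Num.sqrt (x ^+ k) = Num.sqrt x ^+ k.
  move=> x_ge0; rewrite -{1}(sqr_sqrtr x_ge0) -exprM mulnC exprM.
  by rewrite sqrtr_sqr ger0_norm ?exprn_ge0 ?sqrtr_ge0.
have quarter : Num.sqrt 8 / Num.sqrt (2 ^+ 7) = 4^-1 :> R.
  rewrite (_ : 2 ^+ 7 = 8 * 4 ^+ 2 :> R); last by ring.
  rewrite sqrtrM ?ler0n // sqrtr_sqr ger0_norm ?ler0n //.
  by field; rewrite gt_eqF // sqrtr_gt0 ltr0n.
rewrite exprM sqrtX ?exprn_ge0 ?ler0n // -expr_div_n quarter.
rewrite -[- _]mulrN1 expRM_natl lerXn2r ?nnegrE ?invr_ge0 ?expR_ge0 ?ler0n //.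
exact: quarter_le_expRN1.
Qed.

Theorem mainTheorem4 (R : realType) (gamma : R) (n d : nat) (O : eqType)
    (Pi : dproto n O) :
  0 < gamma < 1 ->
  ddepth Pi = d ->
  exists Q : gproto n O,
    [/\ gwf Q,
        gsubcube_like gamma Q,
        (gdepth Q <= d)%N,
        (gcodim Q)%:R <= 7 / (1 - gamma) * d%:R
      & disagree_prob R Pi Q <= expR (- d%:R)].
Proof.
move=> gamma01 dPi; pose M : R := 2 ^+ (7 * d).
have M_ge1 : 1 <= M by rewrite exprn_ege1 // ler1n.
have M_gt0 : 0 < M := lt_le_trans ltr01 M_ge1.
have [Q [_ _ wfQ gQ dQ errQ]] :=
  approximable_all gamma01 M_gt0 (eq_leq dPi) (good_setT n gamma01 M_ge1).
exists Q; split=> //.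
- by apply: sub_gall gQ => X Y [].
- apply: le_trans (gcodim_le gamma01 M_gt0 M_ge1 gQ) _; rewrite lnXn // le_eqVlt; apply/orP; left.
  have [_ gamma_lt1] := andP gamma01.
  by apply/eqP; field; rewrite subr_eq0 gt_eqF //= gt_eqF // ln2_gt0.
rewrite disagree_probE ler_pdivrMr ?exprn_gt0 ?N_gt0 //; apply: le_trans errQ _.
rewrite cardsT card_ffun card_bool card_ord -/(N R n).
apply: le_trans (err_bound_setT _ gamma01 _ _ _) _.
by rewrite ler_wpM2r ?exprn_ge0 ?(ltW (N_gt0 _ _)) // sqrt8_pow_le_expR.
Qed.
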